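(* Let $\mathcal{C}$ be a Fraïssé class with Fraïssé limit $\mathbf{U}$. Then $\mathbf{U}$ has a universal homogeneous endomorphism if and only if $\mathcal{C}$ has the amalgamated extension property and the homo amalgamation property (HAP).
   Context: An embedding is an injective homomorphism reflecting all relations. An age is a class of finitely generated structures of one signature with countably many isomorphism types, closed under finitely generated substructures (up to isomorphism) and with the joint embedding property; $\overline{\mathcal{C}}$ is the class of countable structures all of whose finitely generated substructures are isomorphic to members of $\mathcal{C}$; a Fraïssé class is an age with the amalgamation property and its Fraïssé limit is the unique countable homogeneous structure with that age. A universal homogeneous endomorphism of $\mathbf{U}$ is an endomorphism $u$ such that for every $\mathbf{A}\in\overline{\operatorname{Age}(\mathbf{U})}$ and homomorphism $h:\mathbf{A}\to\mathbf{U}$ there is an embedding $\iota:\mathbf{A}\hookrightarrow\mathbf{U}$ with $h=u\circ\iota$, and for every finitely generated $\mathbf{A}\le\mathbf{U}$ and embedding $\iota:\mathbf{A}\hookrightarrow\mathbf{U}$ with $u\circ\iota=u\restriction_A$ there is an automorphism $\alpha$ of $\mathbf{U}$ with $u\circ\alpha=u$ and $\alpha\restriction_A=\iota$. $\mathcal{C}$ has the amalgamated extension property if for all $\mathbf{A},\mathbf{B}_1,\mathbf{B}_2,\mathbf{T}\in\mathcal{C}$, embeddings $f_i:\mathbf{A}\hookrightarrow\mathbf{B}_i$ and homomorphisms $h_i:\mathbf{B}_i\to\mathbf{T}$ with $h_1f_1=h_2f_2$ there exist $\mathbf{C},\mathbf{T}'\in\mathcal{C}$, embeddings $g_i:\mathbf{B}_i\hookrightarrow\mathbf{C}$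 with $g_1f_1=g_2f_2$, an embedding $k:\mathbf{T}\hookrightarrow\mathbf{T}'$ and a homomorphism $h:\mathbf{C}\to\mathbf{T}'$ with $hg_i=kh_i$. $\mathcal{C}$ has the HAP if for all $\mathbf{A},\mathbf{B}_1,\mathbf{B}_2\in\mathcal{C}$, every embedding $f_1:\mathbf{A}\hookrightarrow\mathbf{B}_1$ and homomorphism $f_2:\mathbf{A}\to\mathbf{B}_2$ there exist $\mathbf{C}\in\mathcal{C}$, an embedding $g_2:\mathbf{B}_2\hookrightarrow\mathbf{C}$ and a homomorphism $g_1:\mathbf{B}_1\to\mathbf{C}$ with $g_1\circ f_1=g_2\circ f_2$. *)

From Stdlib Require Import List Fin.
Set Implicit Arguments.

Record signature := Signature {
  fsym : Type; farity : fsym -> nat;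
  rsym : Type; rarity : rsym -> nat }.

Record structure (sg : signature) := Structure {
  carrier :> Type;
  fint : forall f : fsym sg, (Fin.t (@farity sg f) -> carrier) -> carrier;
  rint : forall r : rsym sg, (Fin.t (@rarity sg r) -> carrier) -> Prop }.
Arguments fint {sg} s f args.
Arguments rint {sg} s r args.

Section Maps.
Variable sg : signature.

Definition is_hom (A B : structure sg) (h : A -> B) : Prop :=
  (forall f args, h (fint A f args) = fint B f (fun i => h (args i))) /\
  (forall r args, rint A r args -> rint B r (fun i => h (args i))).

Definition is_emb (A B : structure sg) (h : A -> B) : Prop :=
  is_hom A B h /\ (forall x y, h x = h y -> x = y) /\
  (forall r args, rint B r (fun i => h (args i)) -> rint A r args).

Definition is_iso (A B : structure sg) (h : A -> B) : Prop :=
  is_emb A B h /\ (forall y, exists x, h x = y).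

Definition isomorphic (A B : structure sg) : Prop := exists h : A -> B, is_iso A B h.

Definition is_aut (A : structure sg) (h : A -> A) : Prop := is_iso A A h.

Inductive gen (A : structure sg) (s : list A) : A -> Prop :=
| gen_in : forall x, In x s -> gen A s x
| gen_fun : forall f args, (forall i, gen A s (args i)) -> gen A s (fint A f args).

Definition genSub (A : structure sg) (s : list A) : structure sg :=
  @Structure sg {x : A | gen A s x}
    (fun f args => exist _ (fint A f (fun i => proj1_sig (args i)))
                     (@gen_fun A s f _ (fun i => proj2_sig (args i))))
    (fun r args => rint A r (fun i => proj1_sig (args i))).

Definition fin_generated (A : structure sg) : Prop :=
  exists s : list A, forall x, gen A s x.

Definition countable_str (A : structure sg) : Prop :=
  exists c : A -> nat, forall x y, c x = c y -> x = y.

Definition cls := structure sg -> Prop.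

Definition age_of (U : structure sg) : cls :=
  fun A => exists s : list U, isomorphic A (genSub U s).

Definition cbar (C : cls) : cls :=
  fun A => countable_str A /\
    forall s : list A, exists B, C B /\ isomorphic (genSub A s) B.

Definition is_age (C : cls) : Prop :=
  (forall A, C A -> fin_generated A) /\
  (exists e : nat -> structure sg, forall A, C A -> exists n, isomorphic A (e n)) /\
  (forall A, C A -> forall (s : list A) B, isomorphic B (genSub A s) -> C B) /\
  (forall A B, C A -> C B -> exists D, C D /\
      (exists g : A -> D, is_emb A D g) /\ (exists g : B -> D, is_emb B D g)).

Definition amalgamation (C : cls) : Prop :=
  forall (A B1 B2 : structure sg) (f1 : A -> B1) (f2 : A -> B2),
    C A -> C B1 -> C B2 -> is_emb A B1 f1 -> is_emb A B2 f2 ->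
    exists (D : structure sg) (g1 : B1 -> D) (g2 : B2 -> D),
      C D /\ is_emb B1 D g1 /\ is_emb B2 D g2 /\
      forall a, g1 (f1 a) = g2 (f2 a).

Definition fraisse_class (C : cls) : Prop := is_age C /\ amalgamation C.

Definition homogeneous (U : structure sg) : Prop :=
  forall (s t : list U) (i : genSub U s -> genSub U t),
    is_iso (genSub U s) (genSub U t) i ->
    exists a : U -> U, is_aut U a /\ forall x, a (proj1_sig x) = proj1_sig (i x).

Definition fraisse_limit (C : cls) (U : structure sg) : Prop :=
  countable_str U /\ homogeneous U /\ forall A, C A <-> age_of U A.

Definition univ_hom_endo (U : structure sg) (u : U -> U) : Prop :=
  is_hom U U u /\
  (forall (A : structure sg) (h : A -> U), cbar (age_of U) A -> is_hom A U h ->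
     exists io : A -> U, is_emb A U io /\ forall a, h a = u (io a)) /\
  (forall (s : list U) (io : genSub U s -> U),
     is_emb (genSub U s) U io -> (forall a, u (io a) = u (proj1_sig a)) ->
     exists al : U -> U, is_aut U al /\ (forall x, u (al x) = u x) /\
       forall a, al (proj1_sig a) = io a).

Definition AEP (C : cls) : Prop :=
  forall (A B1 B2 T : structure sg) (f1 : A -> B1) (f2 : A -> B2)
         (h1 : B1 -> T) (h2 : B2 -> T),
    C A -> C B1 -> C B2 -> C T -> is_emb A B1 f1 -> is_emb A B2 f2 ->
    is_hom B1 T h1 -> is_hom B2 T h2 -> (forall a, h1 (f1 a) = h2 (f2 a)) ->
    exists (D T' : structure sg) (g1 : B1 -> D) (g2 : B2 -> D) (k : T -> T') (h : D -> T'),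
      C D /\ C T' /\ is_emb B1 D g1 /\ is_emb B2 D g2 /\
      (forall a, g1 (f1 a) = g2 (f2 a)) /\ is_emb T T' k /\ is_hom D T' h /\
      (forall b, h (g1 b) = k (h1 b)) /\ (forall b, h (g2 b) = k (h2 b)).

Definition HAP (C : cls) : Prop :=
  forall (A B1 B2 : structure sg) (f1 : A -> B1) (f2 : A -> B2),
    C A -> C B1 -> C B2 -> is_emb A B1 f1 -> is_hom A B2 f2 ->
    exists (D : structure sg) (g1 : B1 -> D) (g2 : B2 -> D),
      C D /\ is_emb B2 D g2 /\ is_hom B1 D g1 /\
      forall a, g1 (f1 a) = g2 (f2 a).

End Maps.

(* Since U is the Fraïssé limit, C is the age of U, so everything is phrased
   with [age_of U].  Maps defined only on a finitely generated substructure
   <s> are handled as total functions that are homomorphisms/embeddings on the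
   subset [gen X s] ([hom_on], [emb_on]); [transport] moves such maps along
   partial embeddings.  Homogeneity of U is used in the form [embed_over]:
   a member of the age extending a finitely generated B embeds into U over
   any given embedding of B.

   (=>) Universality of u realises homomorphisms from the age as u composed
   with embeddings ([factor_through_u]); homogeneity of u identifies two copies
   of a structure with the same image under u ([u_automorphism]).  The
   amalgams required by HAP and AEP are then substructures of U generated by
   the images ([HAP_of_u], [AEP_of_u]).

   (<=) Along an enumeration of U, u is the union of a chain of homomorphisms
   on finitely generated substructures: HAP enlarges the domain by a point
   ([extend_domain]) and AEP solves one "extension task" at a time
   ([solve_task]); the union has the [extension_property]
   ([endo_with_extension_property]).  From it, a forth construction gives the
   universality clause ([u_lifting]) and a back-and-forth construction the
   homogeneity clause ([u_homogeneity]). *)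

From Stdlib Require Import List Fin.
From Stdlib Require Import Classical ClassicalEpsilon ProofIrrelevance FunctionalExtensionality.
From Stdlib Require Import PropExtensionality Lia Cantor.

Section Structures.
Variable sg : signature.
Notation str := (structure sg).

Lemma fin_choice {A : Type} n (Q : Fin.t n -> A -> Prop) :
  (forall i, exists a, Q i a) -> exists F : Fin.t n -> A, forall i, Q i (F i).
Proof.
  intro H. exists (fun i => proj1_sig (constructive_indefinite_description _ (H i))).
  intro i. exact (proj2_sig (constructive_indefinite_description _ (H i))).
Qed.

Definition hom_on (X Y : str) (P : X -> Prop) (f : X -> Y) : Prop :=
  (forall fs args, (forall i, P (args i)) -> f (fint X fs args) = fint Y fs (fun i => f (args i))) /\
  (forall r args, (forall i, P (args i)) -> rint X r args -> rint Y r (fun i => f (args i))).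

Definition emb_on (X Y : str) (P : X -> Prop) (f : X -> Y) : Prop :=
  hom_on X Y P f /\ (forall x y, P x -> P y -> f x = f y -> x = y) /\
  (forall r args, (forall i, P (args i)) -> rint Y r (fun i => f (args i)) -> rint X r args).

Definition closed (X : str) (P : X -> Prop) : Prop :=
  forall fs args, (forall i, P (args i)) -> P (fint X fs args).

Definition img {X Y : Type} (P : X -> Prop) (e : X -> Y) (y : Y) : Prop :=
  exists x, P x /\ e x = y.

Lemma hom_on_mono (X Y : str) (P Q : X -> Prop) f :
  (forall x, Q x -> P x) -> hom_on X Y P f -> hom_on X Y Q f.
Proof. intros H [H1 H2]. split; intros; auto. Qed.

Lemma emb_on_mono (X Y : str) (P Q : X -> Prop) f :
  (forall x, Q x -> P x) -> emb_on X Y P f -> emb_on X Y Q f.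
Proof. intros H [H1 [H2 H3]]. split; [|split]; intros; eauto using hom_on_mono. Qed.

Lemma hom_hom_on (X Y : str) P f : is_hom X Y f -> hom_on X Y P f.
Proof. intros [H1 H2]. split; intros; auto. Qed.

Lemma emb_emb_on (X Y : str) P f : is_emb X Y f -> emb_on X Y P f.
Proof. intros [H1 [H2 H3]]. split; [|split]; intros; eauto using hom_hom_on. Qed.

Lemma hom_on_T (X Y : str) f : hom_on X Y (fun _ => True) f -> is_hom X Y f.
Proof. intros [H1 H2]. split; intros; auto. Qed.

Lemma emb_on_T (X Y : str) f : emb_on X Y (fun _ => True) f -> is_emb X Y f.
Proof. intros [H1 [H2 H3]]. split; [|split]; intros; eauto using hom_on_T. Qed.

Lemma hom_on_comp (X Y Z : str) P Q f g : hom_on X Y P f -> hom_on Y Z Q g ->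
  (forall x, P x -> Q (f x)) -> hom_on X Z P (fun x => g (f x)).
Proof.
  intros [F1 F2] [G1 G2] H. split.
  - intros fs args Ha. rewrite F1, G1 by auto. reflexivity.
  - intros r args Ha Hr. apply G2; auto.
Qed.

Lemma emb_on_comp (X Y Z : str) P Q f g : emb_on X Y P f -> emb_on Y Z Q g ->
  (forall x, P x -> Q (f x)) -> emb_on X Z P (fun x => g (f x)).
Proof.
  intros [F1 [F2 F3]] [G1 [G2 G3]] H. split; [|split].
  - eapply hom_on_comp; eauto.
  - intros x y Hx Hy E. apply F2; auto.
  - intros r args Ha Hr. apply F3; [assumption|]. apply G3; auto.
Qed.

Lemma hom_on_ext (X Y : str) P (f g : X -> Y) : closed X P ->
  (forall x, P x -> f x = g x) -> hom_on X Y P f -> hom_on X Y P g.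
Proof.
  intros Hc E [F1 F2]. split.
  - intros fs args Ha. rewrite <- E by auto. rewrite F1 by auto. f_equal.
    apply functional_extensionality. auto.
  - intros r args Ha Hr. replace (fun i => g (args i)) with (fun i => f (args i)); auto.
    apply functional_extensionality. auto.
Qed.

Lemma emb_on_ext (X Y : str) P (f g : X -> Y) : closed X P ->
  (forall x, P x -> f x = g x) -> emb_on X Y P f -> emb_on X Y P g.
Proof.
  intros Hc E [Hh [Hi H3]]. split; [|split].
  - eapply hom_on_ext; eauto.
  - intros x y Hx Hy. rewrite <- !E by auto. auto.
  - intros r args Ha Hr. apply H3; auto.
    replace (fun i => f (args i)) with (fun i => g (args i)); auto.
    apply functional_extensionality. intro; symmetry; auto.
Qed.

Lemma id_emb (X : str) : is_emb X X (fun x => x).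
Proof. split; [split|split]; auto. Qed.

Lemma hom_comp (X Y Z : str) f g : is_hom X Y f -> is_hom Y Z g -> is_hom X Z (fun x => g (f x)).
Proof.
  intros Hf Hg. apply hom_on_T.
  apply (hom_on_comp X Y Z (fun _ => True) (fun _ => True)); auto using hom_hom_on.
Qed.

Lemma emb_comp (X Y Z : str) f g : is_emb X Y f -> is_emb Y Z g -> is_emb X Z (fun x => g (f x)).
Proof.
  intros Hf Hg. apply emb_on_T.
  apply (emb_on_comp X Y Z (fun _ => True) (fun _ => True)); auto using emb_emb_on.
Qed.

Lemma iso_comp (A B D : str) f g : is_iso A B f -> is_iso B D g -> is_iso A D (fun x => g (f x)).
Proof.
  intros [Hf Sf] [Hg Sg]. split; [apply emb_comp; auto|].
  intro z. destruct (Sg z) as [y <-]. destruct (Sf y) as [x <-]. eauto.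
Qed.

Lemma iso_refl (A : str) : isomorphic A A.
Proof. exists (fun x => x). split; [apply id_emb | eauto]. Qed.

Lemma gen_closed (X : str) l : closed X (gen X l).
Proof. intros fs args H. now apply gen_fun. Qed.

Lemma gen_min (X : str) l (P : X -> Prop) : closed X P -> (forall x, In x l -> P x) ->
  forall x, gen X l x -> P x.
Proof. intros Hc Hl x H. induction H; auto. Qed.

Lemma gen_mono (X : str) l l' : (forall x, In x l -> gen X l' x) ->
  forall x, gen X l x -> gen X l' x.
Proof. intros H. apply gen_min; auto using gen_closed. Qed.

Lemma gen_cons (X : str) a l x : gen X l x -> gen X (a :: l) x.
Proof. apply gen_mono. intros y Hy. apply gen_in. now right. Qed.

Lemma gen_app_l (X : str) l l' x : gen X l x -> gen X (l ++ l') x.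
Proof. apply gen_mono. intros y Hy. apply gen_in, in_or_app. auto. Qed.

Lemma gen_app_r (X : str) l l' x : gen X l' x -> gen X (l ++ l') x.
Proof. apply gen_mono. intros y Hy. apply gen_in, in_or_app. auto. Qed.

Lemma gen_image (X Y : str) l (f : X -> Y) : hom_on X Y (gen X l) f ->
  forall x, gen X l x -> gen Y (map f l) (f x).
Proof.
  intros [Hf _] x H. induction H.
  - apply gen_in. now apply in_map.
  - rewrite Hf by auto. apply gen_fun. auto.
Qed.

Lemma gen_image_inv (X Y : str) l (f : X -> Y) : hom_on X Y (gen X l) f ->
  forall y, gen Y (map f l) y -> img (gen X l) f y.
Proof.
  intros Hf y H. induction H as [y Hy| fs args _ IH].
  - apply in_map_iff in Hy. destruct Hy as [x [<- Hx]]. exists x. split; auto. now apply gen_in.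
  - destruct (fin_choice _ (fun i x => gen X l x /\ f x = args i) IH) as [xs Hxs].
    exists (fint X fs xs). split.
    + apply gen_fun. intro i. apply Hxs.
    + rewrite (proj1 Hf) by (intro i; apply Hxs). f_equal. apply functional_extensionality.
      intro i. apply Hxs.
Qed.

Lemma gen_all_image (X Y : str) (f : X -> Y) L l : is_hom X Y f -> (forall x, gen X L x) ->
  (forall y, In y (map f L) -> In y l) -> forall x, gen Y l (f x).
Proof.
  intros Hf HL Hl x. apply (gen_mono Y (map f L)).
  - intros y Hy. apply gen_in; auto.
  - apply gen_image; auto. apply hom_hom_on; auto.
Qed.

Lemma agree_gen (X Y : str) l (f g : X -> Y) : hom_on X Y (gen X l) f -> hom_on X Y (gen X l) g ->
  (forall x, In x l -> f x = g x) -> forall x, gen X l x -> f x = g x.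
Proof.
  intros Hf Hg Hl x H. induction H as [x Hx| fs args Ha IH]; auto.
  rewrite (proj1 Hf), (proj1 Hg) by auto. f_equal.
  apply functional_extensionality. auto.
Qed.

(* [transport P e phi d] is [phi o e^-1] on the image of [P] under [e] and
   [d] elsewhere: it moves a map defined on [P] along a partial embedding. *)
Definition transport {X Y Z : Type} (P : X -> Prop) (e : X -> Y) (phi : X -> Z) (d : Y -> Z)
    (y : Y) : Z :=
  match excluded_middle_informative (exists x, P x /\ e x = y) with
  | left H => phi (proj1_sig (constructive_indefinite_description _ H))
  | right _ => d y end.

Lemma transport_eq {X Y Z : Type} (P : X -> Prop) (e : X -> Y) (phi : X -> Z) d :
  (forall x y, P x -> P y -> e x = e y -> x = y) ->
  forall x, P x -> transport P e phi d (e x) = phi x.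
Proof.
  intros Hi x Hx. unfold transport. destruct excluded_middle_informative as [H|H].
  - destruct (constructive_indefinite_description _ H) as [x' [Hx' E]]. simpl. f_equal. auto.
  - exfalso. apply H. eauto.
Qed.

Lemma lift_args {X Y : Type} (P : X -> Prop) (e : X -> Y) n (args : Fin.t n -> Y) :
  (forall i, img P e (args i)) ->
  exists xs : Fin.t n -> X, (forall i, P (xs i)) /\ args = fun i => e (xs i).
Proof.
  intros Ha. destruct (fin_choice _ (fun i x => P x /\ e x = args i) Ha) as [xs Hxs].
  exists xs. split; [intro; apply Hxs|].
  apply functional_extensionality. intro i. symmetry. apply Hxs.
Qed.

Lemma transport_hom (X Y Z : str) P e phi d : emb_on X Y P e -> hom_on X Z P phi -> closed X P ->
  hom_on Y Z (img P e) (transport P e phi d).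
Proof.
  intros [[E1 _] [E2 E3]] [F1 F2] Hc.
  assert (Hback : forall n (xs : Fin.t n -> X), (forall i, P (xs i)) ->
            (fun i => transport P e phi d (e (xs i))) = fun i => phi (xs i)).
  { intros n xs Hxs. apply functional_extensionality. intro i. apply transport_eq; auto. }
  split.
  - intros fs args Ha. destruct (lift_args P e _ args Ha) as [xs [Hxs ->]].
    rewrite <- E1, transport_eq, F1 by auto.
    rewrite Hback by auto. reflexivity.
  - intros r args Ha Hr. destruct (lift_args P e _ args Ha) as [xs [Hxs ->]].
    rewrite Hback by auto. apply F2; auto.
Qed.

Lemma transport_emb (X Y Z : str) P e phi d : emb_on X Y P e -> emb_on X Z P phi -> closed X P ->
  emb_on Y Z (img P e) (transport P e phi d).
Proof.
  intros HE HF Hc.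
  assert (Hi : forall x y, P x -> P y -> e x = e y -> x = y) by apply HE.
  split; [|split].
  - apply transport_hom; auto. apply HF.
  - intros y1 y2 [x1 [H1 <-]] [x2 [H2 <-]]. rewrite !transport_eq by auto.
    intro E. f_equal. apply HF; auto.
  - intros r args Ha Hr. destruct (lift_args P e _ args Ha) as [xs [Hxs ->]].
    apply HE; auto. apply HF; auto.
    replace (fun i => phi (xs i)) with (fun i => transport P e phi d (e (xs i))); auto.
    apply functional_extensionality. intro i. apply transport_eq; auto.
Qed.

Lemma transport_emb_gen (X Y Z : str) l (e : X -> Y) (phi : X -> Z) d :
  is_emb X Y e -> is_emb X Z phi ->
  emb_on Y Z (gen Y (map e l)) (transport (fun _ => True) e phi d).
Proof.
  intros He Hphi. eapply emb_on_mono; [|apply transport_emb; auto using emb_emb_on].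
  - intros y Hy. destruct (gen_image_inv _ _ _ _ (hom_hom_on _ _ _ _ (proj1 He)) y Hy) as [x [_ E]].
    exists x. auto.
  - intros ? ? ?; exact I.
Qed.

Lemma transport_hom_gen (X Y Z : str) l (e : X -> Y) (phi : X -> Z) d :
  is_emb X Y e -> is_hom X Z phi ->
  hom_on Y Z (gen Y (map e l)) (transport (fun _ => True) e phi d).
Proof.
  intros He Hphi. eapply hom_on_mono; [|apply transport_hom; auto using emb_emb_on, hom_hom_on].
  - intros y Hy. destruct (gen_image_inv _ _ _ _ (hom_hom_on _ _ _ _ (proj1 He)) y Hy) as [x [_ E]].
    exists x. auto.
  - intros ? ? ?; exact I.
Qed.

Lemma transport_total_eq {X Y Z : Type} (e : X -> Y) (phi : X -> Z) d :
  (forall x y, e x = e y -> x = y) -> forall x, transport (fun _ => True) e phi d (e x) = phi x.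
Proof. intros Hi x. apply transport_eq; auto. Qed.

Definition extend_from {X Y : Type} (P : X -> Prop) (g : {x | P x} -> Y) (d : X -> Y) (x : X) : Y :=
  match excluded_middle_informative (P x) with left p => g (exist _ x p) | right _ => d x end.

Lemma extend_from_eq {X Y : Type} (P : X -> Prop) (g : {x | P x} -> Y) d x (p : P x) :
  extend_from P g d x = g (exist _ x p).
Proof.
  unfold extend_from. destruct excluded_middle_informative as [p'|n]; [|contradiction].
  f_equal. f_equal. apply proof_irrelevance.
Qed.

Lemma sig_eq {X : Type} (P : X -> Prop) (a b : {x | P x}) : proj1_sig a = proj1_sig b -> a = b.
Proof. destruct a as [a pa], b as [b pb]; simpl; intros ->. f_equal. apply proof_irrelevance. Qed.

Lemma extend_from_args (X Y : str) l (g : genSub X l -> Y) d n (args : Fin.t n -> X)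
  (Ha : forall i, gen X l (args i)) :
  (fun i => extend_from (gen X l) g d (args i)) = fun i => g (exist _ (args i) (Ha i)).
Proof. apply functional_extensionality. intro i. apply extend_from_eq. Qed.

Lemma hom_genSub (X Y : str) l (g : genSub X l -> Y) d : is_hom (genSub X l) Y g ->
  hom_on X Y (gen X l) (extend_from (gen X l) g d).
Proof.
  intros [G1 G2]. split.
  - intros fs args Ha. rewrite (extend_from_eq _ _ _ _ (@gen_fun _ X l fs args Ha)).
    rewrite (extend_from_args X Y l g d _ args Ha).
    rewrite <- (G1 fs (fun i => exist _ (args i) (Ha i))). reflexivity.
  - intros r args Ha Hr. rewrite (extend_from_args X Y l g d _ args Ha).
    exact (G2 r (fun i => exist _ (args i) (Ha i)) Hr).
Qed.

Lemma emb_genSub (X Y : str) l (g : genSub X l -> Y) d : is_emb (genSub X l) Y g ->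
  emb_on X Y (gen X l) (extend_from (gen X l) g d).
Proof.
  intros [G [Gi G3]]. split; [|split].
  - apply hom_genSub; auto.
  - intros x y Hx Hy. rewrite (extend_from_eq _ _ _ _ Hx), (extend_from_eq _ _ _ _ Hy). intro E.
    exact (f_equal (@proj1_sig _ _) (Gi _ _ E)).
  - intros r args Ha Hr. rewrite (extend_from_args X Y l g d _ args Ha) in Hr.
    exact (G3 r (fun i => exist _ (args i) (Ha i)) Hr).
Qed.

Lemma genSub_hom (X Y : str) l (f : X -> Y) : hom_on X Y (gen X l) f ->
  is_hom (genSub X l) Y (fun x => f (proj1_sig x)).
Proof.
  intros [F1 F2]. split.
  - intros fs args. apply F1. intro i. exact (proj2_sig (args i)).
  - intros r args Hr. apply F2; auto. intro i. exact (proj2_sig (args i)).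
Qed.

Lemma genSub_emb (X Y : str) l (f : X -> Y) : emb_on X Y (gen X l) f ->
  is_emb (genSub X l) Y (fun x => f (proj1_sig x)).
Proof.
  intros [F [Fi F3]]. split; [|split].
  - apply genSub_hom; auto.
  - intros x y E. apply sig_eq. apply Fi; auto; [exact (proj2_sig x) | exact (proj2_sig y)].
  - intros r args Hr. apply F3; auto. intro i. exact (proj2_sig (args i)).
Qed.

Lemma proj_emb (X : str) l : is_emb (genSub X l) X (fun x => proj1_sig x).
Proof. apply (genSub_emb X X l (fun x => x)), emb_emb_on, id_emb. Qed.

Definition corestrict {X Y : str} l (f : X -> Y) (H : forall x, gen Y l (f x)) : X -> genSub Y l :=
  fun x => exist _ (f x) (H x).

Lemma corestrict_hom (X Y : str) l f H : is_hom X Y f -> is_hom X (genSub Y l) (@corestrict X Y l f H).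
Proof.
  intros [F1 F2]. split.
  - intros fs args. apply sig_eq. apply F1.
  - intros r args Hr. apply F2. auto.
Qed.

Lemma corestrict_emb (X Y : str) l f H : is_emb X Y f -> is_emb X (genSub Y l) (@corestrict X Y l f H).
Proof.
  intros [F [Fi F3]]. split; [|split].
  - apply corestrict_hom; auto.
  - intros x y E. apply Fi. exact (f_equal (@proj1_sig _ _) E).
  - intros r args Hr. apply F3. exact Hr.
Qed.

Lemma emb_on_iso (X Y : str) s p : emb_on X Y (gen X s) p ->
  exists i : genSub X s -> genSub Y (map p s),
    is_iso (genSub X s) (genSub Y (map p s)) i /\ forall x, proj1_sig (i x) = p (proj1_sig x).
Proof.
  intros Hp.
  assert (Hg : forall x : genSub X s, gen Y (map p s) (p (proj1_sig x))).
  { intros [x px]. apply gen_image; auto. apply Hp. }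
  exists (corestrict _ _ Hg). split; [split|reflexivity].
  - apply corestrict_emb, genSub_emb; auto.
  - intros [y py]. destruct (gen_image_inv _ _ _ _ (proj1 Hp) y py) as [x [Hx E]].
    exists (exist _ x Hx). apply sig_eq. exact E.
Qed.

Lemma lift_generators (X : str) l : forall l0, incl l0 l ->
  exists L : list (genSub X l), forall x, In x l0 -> exists p, In (exist _ x p) L.
Proof.
  induction l0 as [|a l0 IH]; intros Hi.
  - exists nil. intros x [].
  - destruct (incl_cons_inv Hi) as [Ha Hi0]. destruct (IH Hi0) as [L HL].
    exists (exist _ a (gen_in X l a Ha) :: L). intros x [<-|Hx].
    + exists (gen_in X l a Ha). now left.
    + destruct (HL x Hx) as [p Hp]. exists p. now right.
Qed.

Lemma genSub_fg (X : str) l : exists L : list (genSub X l), forall y, gen (genSub X l) L y.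
Proof.
  destruct (lift_generators X l l (incl_refl l)) as [L HL]. exists L.
  assert (H : forall x, gen X l x -> forall px, gen (genSub X l) L (exist _ x px)).
  { intros x Hx. induction Hx as [x Hx| fs args Ha IH]; intros px.
    - destruct (HL x Hx) as [p Hp]. apply gen_in.
      replace px with p by apply proof_irrelevance. exact Hp.
    - replace px with (@gen_fun _ X l fs args Ha) by apply proof_irrelevance.
      exact (@gen_fun _ (genSub X l) L fs (fun i => exist _ (args i) (Ha i)) (fun i => IH i (Ha i))). }
  intros [x px]. auto.
Qed.

Section AgeOfU.
Variable U : str.

Lemma age_gen l : age_of U (genSub U l).
Proof. exists l. apply iso_refl. Qed.

Lemma age_emb A : age_of U A -> exists e : A -> U, is_emb A U e.
Proof.
  intros [s [j [Hj _]]]. exists (fun x => proj1_sig (j x)).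
  apply (emb_comp _ _ _ j (fun x => proj1_sig x)); auto. apply proj_emb.
Qed.

Lemma age_fg A : age_of U A -> exists L : list A, forall x, gen A L x.
Proof.
  intros [s [j [Hj Hs]]]. destruct (genSub_fg U s) as [L' HL'].
  assert (HL : exists L, map j L = L').
  { clear HL'. induction L' as [|y L' [L HL]]; [now exists nil|].
    destruct (Hs y) as [x Hx]. exists (x :: L). simpl. f_equal; assumption. }
  destruct HL as [L HL]. exists L. intro x. subst L'.
  destruct (gen_image_inv A _ L j (hom_hom_on _ _ _ _ (proj1 Hj)) (j x) (HL' _)) as [x' [Hx' E]].
  apply (proj1 (proj2 Hj)) in E. now subst.
Qed.

Lemma age_sub A s : age_of U A -> age_of U (genSub A s).
Proof.
  intros HA. destruct (age_emb A HA) as [e He].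
  destruct (emb_on_iso A U s e (emb_emb_on _ _ _ _ He)) as [j [Hj _]].
  exists (map e s), j. exact Hj.
Qed.

Lemma age_cbar A : countable_str U -> age_of U A -> cbar (age_of U) A.
Proof.
  intros [c Hc] HA. destruct (age_emb A HA) as [e He]. split.
  - exists (fun x => c (e x)). intros x y E. apply He. auto.
  - intros s. exists (genSub A s). split; [apply age_sub; auto | apply iso_refl].
Qed.

Lemma cbar_sub A s : cbar (age_of U) A -> age_of U (genSub A s).
Proof.
  intros [_ H]. destruct (H s) as [B [[t [j Hj]] [i Hi]]].
  exists t, (fun x => j (i x)). apply (iso_comp _ _ _ i j); auto.
Qed.

Hypothesis Uhom : homogeneous U.

Lemma homogeneous_partial s p : emb_on U U (gen U s) p ->
  exists a, is_aut U a /\ forall x, gen U s x -> a x = p x.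
Proof.
  intros Hp. destruct (emb_on_iso U U s p Hp) as [i [Hi Ei]].
  destruct (Uhom s (map p s) i Hi) as [a [Ha Hax]].
  exists a. split; auto. intros x Hx. exact (eq_trans (Hax (exist _ x Hx)) (Ei (exist _ x Hx))).
Qed.

Lemma extend_to_emb B l phi : age_of U B -> emb_on B U (gen B l) phi ->
  exists psi, is_emb B U psi /\ forall x, gen B l x -> psi x = phi x.
Proof.
  intros HB Hphi. destruct (age_emb B HB) as [e He].
  pose (q := transport (gen B l) e phi (fun y => y)).
  assert (Hq : emb_on U U (gen U (map e l)) q).
  { eapply emb_on_mono; [|apply transport_emb; auto using gen_closed, emb_emb_on].
    intros y Hy. apply (gen_image_inv B U l e); auto. apply hom_hom_on, He. }
  destruct (homogeneous_partial _ _ Hq) as [a [Ha Hax]].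
  exists (fun x => a (e x)). split.
  - apply (emb_comp _ _ _ e a); auto. apply Ha.
  - intros x Hx. rewrite Hax.
    + apply transport_eq; [|exact Hx]. intros ? ? _ _; apply He.
    + apply gen_image; auto. apply hom_hom_on, He.
Qed.

Lemma embed_over (B D : str) (g : B -> D) (j : B -> U) : is_emb B D g -> is_emb B U j ->
  age_of U D -> (exists L, forall b, gen B L b) ->
  exists psi, is_emb D U psi /\ forall b, psi (g b) = j b.
Proof.
  intros Hg Hj HD [L HL]. destruct (age_emb D HD) as [eD HeD].
  pose (phi := transport (fun _ => True) g j eD).
  destruct (extend_to_emb D (map g L) phi HD (transport_emb_gen _ _ _ L g j eD Hg Hj))
    as [psi [Hpsi Epsi]].
  exists psi. split; auto. intro b. rewrite Epsi.
  - apply transport_total_eq, Hg.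
  - apply gen_image; auto. apply hom_hom_on, Hg.
Qed.

End AgeOfU.

Lemma fin_bound n (F : Fin.t n -> nat) : exists m, forall i, F i <= m.
Proof.
  induction n as [|n IH].
  - exists 0. intro i. apply (Fin.case0 (fun i => F i <= 0) i).
  - destruct (IH (fun i => F (FS i))) as [m Hm]. exists (max (F F1) m). intro i.
    pattern i; apply Fin.caseS'; [lia | intro j; specialize (Hm j); simpl in Hm; lia].
Qed.

(* A stage [(l, f)] is a map [f : X -> Y] considered
   on <l>; a chain is an increasing sequence of stages, each extending the
   previous one. *)
Section Chains.
Variables X Y : str.

Definition stage : Type := (list X * (X -> Y))%type.

Definition extends (st st' : stage) : Prop :=
  (forall z, gen X (fst st) z -> gen X (fst st') z) /\
  (forall z, gen X (fst st) z -> snd st' z = snd st z).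

Definition chain (sq : nat -> stage) : Prop := forall n, extends (sq n) (sq (S n)).

Definition exhaustive (sq : nat -> stage) : Prop := forall x, exists n, gen X (fst (sq n)) x.

Lemma chain_mono sq n m x : chain sq -> n <= m -> gen X (fst (sq n)) x -> gen X (fst (sq m)) x.
Proof. intros Hsq Hnm. induction Hnm; auto. intro Hx. apply Hsq; auto. Qed.

Lemma chain_agree sq n m x : chain sq -> n <= m -> gen X (fst (sq n)) x -> snd (sq m) x = snd (sq n) x.
Proof.
  intros Hsq Hnm. induction Hnm as [|m Hnm IH]; auto. intro Hx.
  rewrite (proj2 (Hsq m)) by (apply (chain_mono sq n); auto). auto.
Qed.

Lemma common_stage sq k (args : Fin.t k -> X) : chain sq -> exhaustive sq ->
  exists m, forall i, gen X (fst (sq m)) (args i).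
Proof.
  intros Hsq Hex.
  destruct (fin_choice k (fun i n => gen X (fst (sq n)) (args i)) (fun i => Hex (args i))) as [N HN].
  destruct (fin_bound k N) as [m Hm]. exists m. intro i. apply (chain_mono sq (N i)); auto.
Qed.

Lemma list_stage sq l : chain sq -> exhaustive sq ->
  exists m, forall x, gen X l x -> gen X (fst (sq m)) x.
Proof.
  intros Hsq Hex.
  assert (Hl : exists m, forall x, In x l -> gen X (fst (sq m)) x).
  { induction l as [|a l [m Hm]]; [exists 0; intros x []|].
    destruct (Hex a) as [m' Hm']. exists (max m m').
    intros x [<-|Hx]; [apply (chain_mono sq m') | apply (chain_mono sq m)]; auto; lia. }
  destruct Hl as [m Hm]. exists m. apply gen_min; auto using gen_closed.
Qed.

Lemma chain_limit sq : chain sq -> exhaustive sq ->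
  exists F : X -> Y, forall n x, gen X (fst (sq n)) x -> F x = snd (sq n) x.
Proof.
  intros Hsq Hex.
  exists (fun x => snd (sq (proj1_sig (constructive_indefinite_description _ (Hex x)))) x).
  intros n x Hx. destruct (constructive_indefinite_description _ (Hex x)) as [k Hk]. simpl.
  rewrite <- (chain_agree sq k (max k n) x), (chain_agree sq n (max k n) x); auto; lia.
Qed.

Section Union.
Variables (sq : nat -> stage) (F : X -> Y).
Hypotheses (Hsq : chain sq) (Hex : exhaustive sq)
  (HF : forall n x, gen X (fst (sq n)) x -> F x = snd (sq n) x).

Lemma union_hom : (forall n, hom_on X Y (gen X (fst (sq n))) (snd (sq n))) -> is_hom X Y F.
Proof.
  intros Hst.
  assert (HFn : forall n, hom_on X Y (gen X (fst (sq n))) F).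
  { intro n. apply (hom_on_ext _ _ _ (snd (sq n))); auto using gen_closed.
    intros; symmetry; auto. }
  split.
  - intros fs args. destruct (common_stage sq _ args) as [m Hm]; auto. apply (HFn m); auto.
  - intros r args. destruct (common_stage sq _ args) as [m Hm]; auto. apply (HFn m); auto.
Qed.

Lemma union_emb : (forall n, emb_on X Y (gen X (fst (sq n))) (snd (sq n))) -> is_emb X Y F.
Proof.
  intros Hst.
  assert (HFn : forall n, emb_on X Y (gen X (fst (sq n))) F).
  { intro n. apply (emb_on_ext _ _ _ (snd (sq n))); auto using gen_closed.
    intros; symmetry; auto. }
  split; [apply union_hom; intro n; apply Hst|split].
  - intros x y E. destruct (Hex x) as [n Hn], (Hex y) as [m Hm].
    apply (HFn (max n m)); auto; [apply (chain_mono sq n) | apply (chain_mono sq m)]; auto; lia.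
  - intros r args. destruct (common_stage sq _ args) as [m Hm]; auto. apply (HFn m); auto.
Qed.

End Union.

Lemma build_chain (c : X -> nat) (Inv : stage -> Prop) (Extra : nat -> stage -> stage -> Prop)
  (st0 : stage) : Inv st0 ->
  (forall n st, Inv st -> exists st', Inv st' /\ extends st st' /\ Extra n st st' /\
     forall x, c x = n -> gen X (fst st') x) ->
  exists sq : nat -> stage, sq 0 = st0 /\ chain sq /\ (forall x, gen X (fst (sq (S (c x)))) x) /\
    forall n, Inv (sq n) /\ Extra n (sq n) (sq (S n)).
Proof.
  intros H0 Hstep.
  pose (next := fun n (st : {st | Inv st}) =>
     constructive_indefinite_description _ (Hstep n (proj1_sig st) (proj2_sig st))).
  pose (stages := fix stages n : {st | Inv st} := match n with
        | 0 => exist _ st0 H0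
        | S k => exist _ (proj1_sig (next k (stages k))) (proj1 (proj2_sig (next k (stages k)))) end).
  exists (fun n => proj1_sig (stages n)). split; [reflexivity|split; [|split]].
  - intro n. apply (proj2_sig (next n (stages n))).
  - intro x. apply (proj2_sig (next (c x) (stages (c x)))). reflexivity.
  - intro n. split; [exact (proj2_sig (stages n)) | apply (proj2_sig (next n (stages n)))].
Qed.

End Chains.

Lemma fg_images (U B1 B2 : str) (j1 : B1 -> U) (j2 : B2 -> U) :
  age_of U B1 -> age_of U B2 -> is_hom B1 U j1 -> is_hom B2 U j2 ->
  exists l, (forall b, gen U l (j1 b)) /\ (forall b, gen U l (j2 b)).
Proof.
  intros HB1 HB2 Hj1 Hj2.
  destruct (age_fg U B1 HB1) as [L1 HL1], (age_fg U B2 HB2) as [L2 HL2].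
  exists (map j1 L1 ++ map j2 L2). split.
  - apply (gen_all_image _ _ _ L1); auto. intros y Hy. apply in_or_app; auto.
  - apply (gen_all_image _ _ _ L2); auto. intros y Hy. apply in_or_app; auto.
Qed.

Section Necessity.
Variable U : str.
Hypothesis Uhom : homogeneous U.
Hypothesis Ucount : countable_str U.
Variable u : U -> U.
Hypothesis Hu : univ_hom_endo U u.

Lemma factor_through_u (A : str) (h : A -> U) : age_of U A -> is_hom A U h ->
  exists io : A -> U, is_emb A U io /\ forall a, h a = u (io a).
Proof. intros HA Hh. exact (proj1 (proj2 Hu) A h (age_cbar U A Ucount HA) Hh). Qed.

Lemma u_automorphism (A : str) (e1 e2 : A -> U) : age_of U A -> is_emb A U e1 -> is_emb A U e2 ->
  (forall a, u (e1 a) = u (e2 a)) ->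
  exists al, is_aut U al /\ (forall x, u (al x) = u x) /\ forall a, al (e2 a) = e1 a.
Proof.
  intros HA He1 He2 Eu. destruct (age_fg U A HA) as [L HL].
  pose (p := transport (fun _ => True) e2 e1 (fun y => y)).
  assert (Hinj : forall x y, e2 x = e2 y -> x = y) by apply He2.
  assert (Hp : emb_on U U (gen U (map e2 L)) p) by (apply transport_emb_gen; auto).
  destruct (proj2 (proj2 Hu) _ (fun x => p (proj1_sig x)) (genSub_emb _ _ _ _ Hp))
    as [al [Hal [Ealu Eal]]].
  - intros [y py]. simpl.
    destruct (gen_image_inv _ _ _ _ (hom_hom_on _ _ _ _ (proj1 He2)) y py) as [a [_ <-]].
    unfold p. rewrite transport_total_eq; auto.
  - exists al. split; [|split]; auto. intro a.
    pose proof (gen_image _ _ _ _ (hom_hom_on _ _ _ _ (proj1 He2)) _ (HL a)) as Ha.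
    exact (eq_trans (Eal (exist _ _ Ha)) (transport_total_eq _ _ _ Hinj a)).
Qed.

Lemma HAP_of_u : HAP (age_of U).
Proof.
  intros A B1 B2 f1 f2 HA HB1 HB2 Hf1 Hf2.
  destruct (age_emb U B2 HB2) as [e2 He2].
  destruct (factor_through_u A (fun a => e2 (f2 a)) HA) as [io [Hio Eio]].
  { apply hom_comp; auto. apply He2. }
  (* move B1 into U over the embedding io of A *)
  destruct (embed_over U Uhom A B1 f1 io Hf1 Hio HB1 (age_fg U A HA)) as [k [Hk Ek]].
  assert (Hku : is_hom B1 U (fun b => u (k b))) by (apply hom_comp; [apply Hk | apply Hu]).
  destruct (fg_images U B1 B2 _ _ HB1 HB2 Hku (proj1 He2)) as [l [G1 G2]].
  exists (genSub U l), (corestrict _ _ G1), (corestrict _ _ G2). split; [|split; [|split]].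
  - apply age_gen.
  - apply corestrict_emb; auto.
  - apply corestrict_hom; auto.
  - intro a. apply sig_eq. simpl. rewrite Ek. symmetry. apply Eio.
Qed.

Lemma AEP_of_u : AEP (age_of U).
Proof.
  intros A B1 B2 T f1 f2 h1 h2 HA HB1 HB2 HT Hf1 Hf2 Hh1 Hh2 Eh.
  destruct (age_emb U T HT) as [eT HeT].
  destruct (factor_through_u B1 (fun b => eT (h1 b)) HB1) as [i1 [Hi1 Ei1]].
  { apply hom_comp; auto. apply HeT. }
  destruct (factor_through_u B2 (fun b => eT (h2 b)) HB2) as [i2 [Hi2 Ei2]].
  { apply hom_comp; auto. apply HeT. }
  (* the two copies of A in U agree after u, so an automorphism preserving u
     moves the copy of B2 over A onto the copy of B1 *)
  destruct (u_automorphism A (fun a => i1 (f1 a)) (fun a => i2 (f2 a)) HA)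
    as [al [Hal [Ealu Eal]]]; try (apply emb_comp; auto).
  { intro a. rewrite <- Ei1, <- Ei2, Eh. reflexivity. }
  assert (Hk2 : is_emb B2 U (fun b => al (i2 b))) by (apply emb_comp; auto; apply Hal).
  destruct (fg_images U B1 B2 _ _ HB1 HB2 (proj1 Hi1) (proj1 Hk2)) as [l [G1 G2]].
  assert (Hul : is_hom (genSub U l) U (fun d => u (proj1_sig d))).
  { apply genSub_hom, hom_hom_on, Hu. }
  destruct (fg_images U T (genSub U l) _ _ HT (age_gen U l) (proj1 HeT) Hul) as [l' [GT GH]].
  exists (genSub U l), (genSub U l'), (corestrict _ _ G1), (corestrict _ _ G2),
    (corestrict _ _ GT), (corestrict _ _ GH).
  split; [apply age_gen|]. split; [apply age_gen|].
  split; [apply corestrict_emb; auto|]. split; [apply corestrict_emb; auto|].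
  split; [|split; [apply corestrict_emb; auto|split; [apply corestrict_hom; auto|split]]].
  - intro a. apply sig_eq. simpl. symmetry. apply Eal.
  - intro b. apply sig_eq. simpl. symmetry. apply Ei1.
  - intro b. apply sig_eq. simpl. rewrite Ealu. symmetry. apply Ei2.
Qed.

End Necessity.

Definition extension_property (U : str) (u : U -> U) : Prop :=
  forall t r phi g, emb_on U U (gen U t) phi -> (forall x, gen U t x -> gen U r (phi x)) ->
    hom_on U U (gen U r) g -> (forall x, gen U t x -> g (phi x) = u x) ->
    exists k, emb_on U U (gen U r) k /\ (forall y, gen U r y -> u (k y) = g y) /\
      (forall x, gen U t x -> k (phi x) = x).

Section OneStep.
Variable U : str.
Hypothesis Uhom : homogeneous U.
Hypothesis Hage_AEP : AEP (age_of U).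
Hypothesis Hage_HAP : HAP (age_of U).

(* HAP: a homomorphism on <s> extends to <x :: s>. *)
Lemma extend_domain s f x : hom_on U U (gen U s) f ->
  exists f', hom_on U U (gen U (x :: s)) f' /\ forall y, gen U s y -> f' y = f y.
Proof.
  intros Hf.
  assert (Hin : forall a : genSub U s, gen U (x :: s) (proj1_sig a)).
  { intro a. apply gen_cons. exact (proj2_sig a). }
  assert (Hin2 : forall a : genSub U s, gen U (map f s) (f (proj1_sig a))).
  { intro a. apply gen_image; auto. exact (proj2_sig a). }
  destruct (Hage_HAP _ _ _ (corestrict _ _ Hin) (corestrict _ _ Hin2)
              (age_gen U s) (age_gen U (x :: s)) (age_gen U (map f s)))
    as [D [g1 [g2 [HD [Hg2 [Hg1 E]]]]]];
    [apply corestrict_emb, proj_emb | apply corestrict_hom, genSub_hom; auto |].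
  destruct (embed_over U Uhom _ D g2 (fun b => proj1_sig b) Hg2 (proj_emb _ _) HD (genSub_fg _ _))
    as [psi [Hpsi Epsi]].
  exists (extend_from (gen U (x :: s)) (fun b => psi (g1 b)) f). split.
  - apply hom_genSub. apply hom_comp; auto. apply Hpsi.
  - intros y Hy. rewrite (extend_from_eq _ _ _ _ (Hin (exist _ y Hy))).
    specialize (E (exist _ y Hy)). specialize (Epsi (corestrict _ _ Hin2 (exist _ y Hy))).
    unfold corestrict in E, Epsi. simpl in E, Epsi |- *. rewrite E. exact Epsi.
Qed.

Definition task_posed (s : list U) (f : U -> U) t r (phi g : U -> U) : Prop :=
  (forall x, gen U t x -> gen U s x) /\ emb_on U U (gen U t) phi /\
  (forall x, gen U t x -> gen U r (phi x)) /\ hom_on U U (gen U r) g /\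
  (forall x, gen U t x -> g (phi x) = f x).

Definition task_solved (s : list U) (f : U -> U) t r (phi g : U -> U) : Prop :=
  exists k, emb_on U U (gen U r) k /\ (forall y, gen U r y -> gen U s (k y) /\ f (k y) = g y) /\
    (forall x, gen U t x -> k (phi x) = x).

Lemma task_amalgam s f t r phi g : hom_on U U (gen U s) f -> task_posed s f t r phi g ->
  exists (D : str) (g1 : genSub U s -> D) (g2 : genSub U r -> D) (F : D -> U),
    age_of U D /\ is_emb _ _ g1 /\ is_emb _ _ g2 /\ is_hom _ _ F /\
    (forall a b, gen U t (proj1_sig a) -> proj1_sig b = phi (proj1_sig a) -> g1 a = g2 b) /\
    (forall a, F (g1 a) = f (proj1_sig a)) /\ (forall b, F (g2 b) = g (proj1_sig b)).
Proof.
  intros Hf [Hts [Hphi [Hphir [Hg Hgf]]]].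
  assert (Hin : forall a : genSub U t, gen U s (proj1_sig a)).
  { intro a. apply Hts. exact (proj2_sig a). }
  assert (Hin2 : forall a : genSub U t, gen U r (phi (proj1_sig a))).
  { intro a. apply Hphir. exact (proj2_sig a). }
  pose (Tl := map f s ++ map g r).
  assert (Hh1 : forall b : genSub U s, gen U Tl (f (proj1_sig b))).
  { intro b. apply gen_app_l. apply gen_image; auto. exact (proj2_sig b). }
  assert (Hh2 : forall b : genSub U r, gen U Tl (g (proj1_sig b))).
  { intro b. apply gen_app_r. apply gen_image; auto. exact (proj2_sig b). }
  destruct (Hage_AEP _ _ _ _ (corestrict _ _ Hin) (corestrict _ _ Hin2)
              (corestrict _ _ Hh1) (corestrict _ _ Hh2)
              (age_gen U t) (age_gen U s) (age_gen U r) (age_gen U Tl))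
    as [D [T' [g1 [g2 [k [h [HD [HT' [Hg1 [Hg2 [E12 [Hk [Hh [Eh1 Eh2]]]]]]]]]]]]]];
    [apply corestrict_emb, proj_emb | apply corestrict_emb, genSub_emb; auto
    | apply corestrict_hom, genSub_hom; auto | apply corestrict_hom, genSub_hom; auto
    | intro a; apply sig_eq; simpl; symmetry; apply Hgf, (proj2_sig a) |].
  destruct (embed_over U Uhom _ T' k (fun b => proj1_sig b) Hk (proj_emb _ _) HT' (genSub_fg _ _))
    as [psT [HpsT EpsT]].
  exists D, g1, g2, (fun d => psT (h d)).
  split; [auto|split; [auto|split; [auto|split; [apply hom_comp; auto; apply HpsT|split]]]].
  - intros a b Ha Eb. specialize (E12 (exist _ _ Ha)).
    replace a with (corestrict _ _ Hin (exist _ _ Ha)) by (apply sig_eq; reflexivity).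
    replace b with (corestrict _ _ Hin2 (exist _ _ Ha)) by (apply sig_eq; symmetry; exact Eb).
    exact E12.
  - split; intro; [rewrite Eh1 | rewrite Eh2]; apply EpsT.
Qed.

(* AEP: a posed task can be solved in an extension of the stage. *)
Lemma solve_task s f t r phi g : hom_on U U (gen U s) f -> task_posed s f t r phi g ->
  exists s' f', (forall y, gen U s y -> gen U s' y) /\ (forall y, gen U s y -> f' y = f y) /\
    hom_on U U (gen U s') f' /\ task_solved s' f' t r phi g.
Proof.
  intros Hf Htask.
  destruct (task_amalgam s f t r phi g Hf Htask)
    as [D [g1 [g2 [F [HD [Hg1 [Hg2 [HF [E12 [EF1 EF2]]]]]]]]]].
  destruct Htask as [Hts [Hphi [Hphir [Hg Hgf]]]].
  (* place D in U over the domain <s> of the current stage *)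
  destruct (embed_over U Uhom _ D g1 (fun b => proj1_sig b) Hg1 (proj_emb _ _) HD (genSub_fg _ _))
    as [psD [HpsD EpsD]].
  destruct (age_fg U D HD) as [LD HLD].
  assert (HpsDi : forall x y, psD x = psD y -> x = y) by apply HpsD.
  pose (f' := transport (fun _ => True) psD F f).
  assert (Ef' : forall d, f' (psD d) = F d) by (intro d; apply transport_total_eq; auto).
  assert (Hin' : forall d, gen U (map psD LD) (psD d)).
  { intro d. apply gen_image; auto. apply hom_hom_on, HpsD. }
  assert (EpsD' : forall y (Hy : gen U s y), psD (g1 (exist _ y Hy)) = y) by exact (fun y Hy => EpsD _).
  exists (map psD LD), f'. split; [|split; [|split]].
  - intros y Hy. rewrite <- (EpsD' y Hy). apply Hin'.
  - intros y Hy. rewrite <- (EpsD' y Hy) at 1. rewrite Ef'. apply EF1.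
  - apply transport_hom_gen; auto.
  - exists (extend_from (gen U r) (fun b => psD (g2 b)) (fun y => y)). split; [|split].
    + apply emb_genSub. apply emb_comp; auto.
    + intros y Hy. rewrite (extend_from_eq _ _ _ _ Hy). split; auto.
      rewrite Ef'. apply EF2.
    + intros x Hx. rewrite (extend_from_eq _ _ _ _ (Hphir x Hx)).
      rewrite <- (E12 (exist _ x (Hts x Hx))) by auto. apply EpsD.
Qed.

End OneStep.

(* Tasks are coded by natural numbers; at step [n] the
   task coded by the first component of [n] is solved and the point of code
   [n] is added to the domain.  Since the code [n] of a pair (task, m) is at
   least [m], every task is eventually posed and then solved. *)
Section Construction.
Variable U : str.
Hypothesis Uhom : homogeneous U.
Hypothesis Hage_AEP : AEP (age_of U).
Hypothesis Hage_HAP : HAP (age_of U).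
Variable c : U -> nat.
Hypothesis Hc : forall x y, c x = c y -> x = y.

Fixpoint list_code (l : list U) : nat :=
  match l with nil => 0 | x :: l' => S (Cantor.to_nat (c x, list_code l')) end.

Lemma list_code_inj l l' : list_code l = list_code l' -> l = l'.
Proof.
  revert l'. induction l as [|x l IH]; intros [|y l'] E; try discriminate; auto.
  assert (E' : Cantor.to_nat (c x, list_code l) = Cantor.to_nat (c y, list_code l'))
    by exact (f_equal pred E).
  apply (f_equal Cantor.of_nat) in E'. rewrite !Cantor.cancel_of_to in E'.
  injection E' as E1 E2. f_equal; auto.
Qed.

(* A task is determined by the lists [t], [r] and the values of [phi] on [t]
   and of [g] on [r]. *)
Definition task_code (t r vt vr : list U) : nat :=
  Cantor.to_nat (Cantor.to_nat (list_code t, list_code r), Cantor.to_nat (list_code vt, list_code vr)).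

Lemma task_code_inj t r vt vr t' r' vt' vr' : task_code t r vt vr = task_code t' r' vt' vr' ->
  t = t' /\ r = r' /\ vt = vt' /\ vr = vr'.
Proof.
  unfold task_code. intro E. apply (f_equal Cantor.of_nat) in E. rewrite !Cantor.cancel_of_to in E.
  pose proof (f_equal fst E) as E1. pose proof (f_equal snd E) as E2. cbn [fst snd] in E1, E2.
  apply (f_equal Cantor.of_nat) in E1, E2. rewrite !Cantor.cancel_of_to in E1, E2.
  pose proof (f_equal fst E1) as F1. pose proof (f_equal snd E1) as F2.
  pose proof (f_equal fst E2) as F3. pose proof (f_equal snd E2) as F4. cbn [fst snd] in F1, F2, F3, F4.
  repeat split; apply list_code_inj; auto.
Qed.

Lemma task_solved_transfer s f t r phi g phi0 g0 : task_solved U s f t r phi0 g0 ->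
  (forall x, gen U t x -> phi x = phi0 x) -> (forall y, gen U r y -> g y = g0 y) ->
  task_solved U s f t r phi g.
Proof.
  intros [k [Hk [Hk1 Hk2]]] Ep Eg. exists k. split; [|split]; auto.
  - intros y Hy. rewrite Eg by auto. auto.
  - intros x Hx. rewrite Ep by auto. auto.
Qed.

Lemma task_solved_mono s f s' f' t r phi g : task_solved U s f t r phi g ->
  (forall y, gen U s y -> gen U s' y) -> (forall y, gen U s y -> f' y = f y) ->
  task_solved U s' f' t r phi g.
Proof.
  intros [k [Hk [Hk1 Hk2]]] Hs Ef. exists k. split; [|split]; auto.
  intros y Hy. destruct (Hk1 y Hy) as [H1 H2]. split; auto. rewrite Ef; auto.
Qed.

Definition hom_stage (st : stage U U) : Prop := hom_on U U (gen U (fst st)) (snd st).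

Definition solves_code (K : nat) (st st' : stage U U) : Prop :=
  forall t r phi g, task_posed U (fst st) (snd st) t r phi g ->
    task_code t r (map phi t) (map g r) = K -> task_solved U (fst st') (snd st') t r phi g.

Lemma solve_coded_task K st : hom_stage st ->
  exists st', hom_stage st' /\ extends U U st st' /\ solves_code K st st'.
Proof.
  destruct st as [s f]. unfold hom_stage. simpl. intro Hf.
  destruct (classic (exists t r phi g, task_posed U s f t r phi g /\
                       task_code t r (map phi t) (map g r) = K))
    as [[t0 [r0 [phi0 [g0 [Hok0 Ec0]]]]]|Hno].
  - destruct (solve_task U Uhom Hage_AEP s f t0 r0 phi0 g0 Hf Hok0) as [s1 [f1 [Hs1 [Ef1 [Hf1 Hd]]]]].
    exists (s1, f1). split; [|split; [split|]]; auto.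
    intros t r phi g Hok Ec. rewrite <- Ec0 in Ec. apply task_code_inj in Ec.
    destruct Ec as [-> [-> [Ep Eg]]].
    apply (task_solved_transfer _ _ _ _ _ _ phi0 g0); auto; apply agree_gen;
      try apply Hok; try apply Hok0; apply map_ext_in_iff; auto.
  - exists (s, f). split; [|split; [split|]]; auto.
    intros t r phi g Hok Ec. exfalso. apply Hno. eauto 10.
Qed.

Lemma construction_step n st : hom_stage st ->
  exists st', hom_stage st' /\ extends U U st st' /\ solves_code (fst (Cantor.of_nat n)) st st' /\
    forall x, c x = n -> gen U (fst st') x.
Proof.
  intro Hst. destruct (solve_coded_task (fst (Cantor.of_nat n)) st Hst)
    as [[s1 f1] [Hf1 [[Hs1 Ef1] Hd1]]].
  destruct (classic (exists x, c x = n)) as [[x Hx]|Hno].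
  - destruct (extend_domain U Uhom Hage_HAP s1 f1 x Hf1) as [f2 [Hf2 Ef2]].
    exists (x :: s1, f2). split; [exact Hf2|split; [split|split]].
    + intros y Hy. apply gen_cons. auto.
    + intros y Hy. rewrite Ef2 by auto. auto.
    + intros t r phi g Hok Ec. apply (task_solved_mono s1 f1); auto.
      intros y Hy; apply gen_cons; auto.
    + intros y Hy. apply gen_in. left. apply Hc. congruence.
  - exists (s1, f1). split; [exact Hf1|split; [split; assumption|split; [exact Hd1|]]].
    intros y Hy. exfalso. eauto.
Qed.

Lemma endo_with_extension_property : exists u, is_hom U U u /\ extension_property U u.
Proof.
  assert (H0 : hom_stage (nil, fun x => x)) by apply hom_hom_on, id_emb.
  destruct (build_chain U U c hom_stage (fun n => solves_code (fst (Cantor.of_nat n))) _ H0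
              construction_step) as [sq [_ [Hch [Hcov Hsq]]]].
  assert (Hex : exhaustive U U sq) by (intro x; exists (S (c x)); apply Hcov).
  destruct (chain_limit U U sq Hch Hex) as [u Hu].
  exists u. split; [apply (union_hom U U sq u Hch Hex Hu); intro n; apply Hsq|].
  intros t r phi g Hphi Hphir Hg Hgu.
  destruct (list_stage U U sq t Hch Hex) as [m Hm].
  (* the task is posed at stage [n], whose code is that of the task, and
     solved at stage [S n] *)
  pose (n := Cantor.to_nat (task_code t r (map phi t) (map g r), m)).
  assert (Hmn : m <= n) by (pose proof (Cantor.to_nat_non_decreasing (task_code t r (map phi t) (map g r)) m); unfold n; lia).
  assert (Hposed : task_posed U (fst (sq n)) (snd (sq n)) t r phi g).
  { split; [|split; [|split; [|split]]]; auto.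
    - intros x Hx. apply (chain_mono U U sq m); auto.
    - intros x Hx. rewrite Hgu, (Hu n) by (auto; apply (chain_mono U U sq m); auto). reflexivity. }
  destruct (proj2 (Hsq n) t r phi g Hposed) as [k [Hk [Hk1 Hk2]]].
  { unfold n. rewrite Cantor.cancel_of_to. reflexivity. }
  exists k. split; [|split]; auto.
  intros y Hy. destruct (Hk1 y Hy). rewrite (Hu (S n)); auto.
Qed.

End Construction.

Section ExtensionProperty.
Variable U : str.
Variable u : U -> U.
Hypothesis Huh : is_hom U U u.
Hypothesis Hext : extension_property U u.

Section BackAndForth.
Variable c : U -> nat.
Hypothesis Hc : forall x y, c x = c y -> x = y.

Definition u_stage (st : stage U U) : Prop :=
  emb_on U U (gen U (fst st)) (snd st) /\ (forall x, gen U (fst st) x -> u (snd st x) = u x).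

Definition inverse_map (a : list U) (p : U -> U) : U -> U := transport (gen U a) p (fun z => z) (fun z => z).

Lemma inverse_stage a p : u_stage (a, p) ->
  u_stage (map p a, inverse_map a p) /\
  (forall z, gen U a z -> inverse_map a p (p z) = z) /\
  (forall y, gen U (map p a) y -> p (inverse_map a p y) = y).
Proof.
  intros [Hp Hu]. simpl in *.
  assert (Hpi : forall x y, gen U a x -> gen U a y -> p x = p y -> x = y) by apply Hp.
  assert (Hq : forall z, gen U a z -> inverse_map a p (p z) = z) by (intros; apply transport_eq; auto).
  split; [split|split]; auto; simpl.
  - eapply emb_on_mono; [|apply transport_emb; auto using gen_closed, emb_emb_on, id_emb].
    intros y Hy. apply (gen_image_inv _ _ _ _ (proj1 Hp)); auto.
  - intros y Hy. destruct (gen_image_inv _ _ _ _ (proj1 Hp) y Hy) as [z [Hz <-]].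
    rewrite Hq by auto. symmetry; auto.
  - intros y Hy. destruct (gen_image_inv _ _ _ _ (proj1 Hp) y Hy) as [z [Hz <-]].
    rewrite Hq; auto.
Qed.

Lemma forth a p x : u_stage (a, p) ->
  exists p', u_stage (x :: a, p') /\ forall z, gen U a z -> p' z = p z.
Proof.
  intros HI. destruct (inverse_stage a p HI) as [[Hq Huq] [Hqp Hpq]]. simpl in Hq, Huq.
  destruct HI as [Hp Hu]. simpl in Hp, Hu.
  destruct (Hext (map p a) (x :: a) (inverse_map a p) u Hq) as [k [Hk [Hku Hkq]]].
  - intros y Hy. destruct (gen_image_inv _ _ _ _ (proj1 Hp) y Hy) as [z [Hz <-]].
    rewrite Hqp by auto. apply gen_cons; auto.
  - apply hom_hom_on; auto.
  - auto.
  - exists k. split; [split; assumption|].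
    intros z Hz. rewrite <- (Hqp z Hz) at 1. apply Hkq. apply gen_image; auto. apply Hp.
Qed.

(* back: the range can be enlarged, by going forth with the inverse *)
Lemma back a p y : u_stage (a, p) ->
  exists a' p', u_stage (a', p') /\ extends U U (a, p) (a', p') /\ img (gen U a') p' y.
Proof.
  intros HI. destruct (inverse_stage a p HI) as [HIq [Hqp Hpq]].
  destruct (forth _ _ y HIq) as [q' [HIq' Eq']].
  destruct (inverse_stage _ _ HIq') as [HIp'' [Hq'p Hpq']].
  destruct HI as [Hp Hu]; simpl in Hp, Hu.
  assert (Eqp : forall z, gen U a z -> q' (p z) = z).
  { intros z Hz. rewrite Eq' by (apply gen_image; auto; apply Hp). auto. }
  exists (map q' (y :: map p a)), (inverse_map (y :: map p a) q'). split; [exact HIp''|split; [split|]].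
  - intros z Hz. rewrite <- (Eqp z Hz). apply gen_image; [apply HIq'|]. apply gen_cons, gen_image; auto. apply Hp.
  - intros z Hz. simpl. rewrite <- (Eqp z Hz) at 1. apply Hq'p. apply gen_cons, gen_image; auto. apply Hp.
  - exists (q' y). split; [apply gen_image; [apply HIq'|apply gen_in; left; auto]|].
    apply Hq'p. apply gen_in; left; auto.
Qed.

Lemma back_and_forth_step n st : u_stage st ->
  exists st', u_stage st' /\ extends U U st st' /\
    (forall y, c y = n -> img (gen U (fst st')) (snd st') y) /\
    forall x, c x = n -> gen U (fst st') x.
Proof.
  destruct st as [a p]. intro HI.
  destruct (classic (exists y, c y = n)) as [[y Hy]|Hno].
  - destruct (forth a p y HI) as [p1 [HI1 E1]].
    destruct (back _ _ y HI1) as [a2 [p2 [HI2 [[S2 E2] I2]]]].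
    assert (Hy' : forall y', c y' = n -> y' = y) by (intros y' Hy'; apply Hc; congruence).
    exists (a2, p2). split; [exact HI2|split; [split|split]].
    + intros z Hz. apply S2, gen_cons; auto.
    + intros z Hz. simpl. rewrite E2 by (apply gen_cons; auto). auto.
    + intros y' E. rewrite (Hy' y' E). exact I2.
    + intros y' E. rewrite (Hy' y' E). apply S2, gen_in; left; auto.
  - exists (a, p). split; [exact HI|split; [split; auto|split]];
      intros y Hy; exfalso; eauto.
Qed.

Lemma u_homogeneity (s : list U) (io : genSub U s -> U) : is_emb (genSub U s) U io ->
  (forall a, u (io a) = u (proj1_sig a)) ->
  exists al : U -> U, is_aut U al /\ (forall x, u (al x) = u x) /\ forall a, al (proj1_sig a) = io a.
Proof.
  intros Hio Huio.
  assert (H0 : u_stage (s, extend_from (gen U s) io (fun z => z))).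
  { split; simpl; [apply emb_genSub; auto|]. intros x Hx. rewrite (extend_from_eq _ _ _ _ Hx). apply Huio. }
  destruct (build_chain U U c u_stage (fun n _ st' => forall y, c y = n -> img (gen U (fst st')) (snd st') y)
              _ H0 back_and_forth_step) as [sq [Hsq0 [Hch [Hcov Hsq]]]].
  assert (Hex : exhaustive U U sq) by (intro x; exists (S (c x)); apply Hcov).
  destruct (chain_limit U U sq Hch Hex) as [al Hal].
  exists al. split; [split|split].
  - apply (union_emb U U sq al Hch Hex Hal). intro n. apply Hsq.
  - intro y. destruct (proj2 (Hsq (c y)) y eq_refl) as [z [Hz <-]].
    exists z. apply (Hal (S (c y))), Hz.
  - intro x. destruct (Hex x) as [n Hn]. rewrite (Hal n x Hn). apply (proj2 (proj1 (Hsq n))), Hn.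
  - intros [x px]. simpl. rewrite (Hal 0 x); rewrite Hsq0; [apply extend_from_eq | exact px].
Qed.

End BackAndForth.

(* Universality: for a countable [A] all of whose finitely generated
   substructures lie in the age, a homomorphism [h : A -> U] factors as u
   composed with an embedding, built as the union of a forth-only chain. *)
Section Universality.
Variables (A : str) (h : A -> U).
Hypothesis Hh : is_hom A U h.
Hypothesis Hage : forall l, age_of U (genSub A l).
Variable cA : A -> nat.
Hypothesis HcA : forall x y, cA x = cA y -> x = y.

Definition lifting_stage (st : stage A U) : Prop :=
  emb_on A U (gen A (fst st)) (snd st) /\ forall x, gen A (fst st) x -> u (snd st x) = h x.

Lemma lifting_start : exists io0, lifting_stage (nil, io0).
Proof.
  destruct (age_emb U _ (Hage nil)) as [psi0 Hpsi0].
  exists (extend_from (gen A nil) psi0 h). split; simpl; [apply emb_genSub; auto|].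
  (* <nil> is generated by nothing, so any two homomorphisms agree on it *)
  apply agree_gen; [|apply hom_hom_on; auto|intros x []].
  apply (hom_on_comp A U U _ (fun _ => True)); [apply hom_genSub, Hpsi0|apply hom_hom_on; auto|].
  intros; exact I.
Qed.

Lemma lifting_step l x io : lifting_stage (l, io) ->
  exists io', lifting_stage (x :: l, io') /\ forall z, gen A l z -> io' z = io z.
Proof.
  intros [Hio Huio]. simpl in Hio, Huio.
  (* an arbitrary copy [psi] of <x :: l> in U, and the task it poses to u *)
  destruct (age_emb U _ (Hage (x :: l))) as [psi0 Hpsi0].
  pose (psi := extend_from (gen A (x :: l)) psi0 h).
  assert (Hpsi : emb_on A U (gen A (x :: l)) psi) by (apply emb_genSub; auto).
  assert (Hpsil : emb_on A U (gen A l) psi).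
  { eapply emb_on_mono; [|exact Hpsi]. intros; apply gen_cons; auto. }
  pose (phi := transport (gen A l) io psi (fun z => z)).
  pose (g := transport (gen A (x :: l)) psi h (fun z => z)).
  assert (Hioi : forall a b, gen A l a -> gen A l b -> io a = io b -> a = b) by apply Hio.
  assert (Hpsii : forall a b, gen A (x :: l) a -> gen A (x :: l) b -> psi a = psi b -> a = b)
    by apply Hpsi.
  assert (Ephi : forall z, gen A l z -> phi (io z) = psi z) by (intros; apply transport_eq; auto).
  assert (Eg : forall z, gen A (x :: l) z -> g (psi z) = h z) by (intros; apply transport_eq; auto).
  destruct (Hext (map io l) (map psi (x :: l)) phi g) as [k [Hk [Hku Hkphi]]].
  - eapply emb_on_mono; [|apply transport_emb; auto using gen_closed].
    intros y Hy. apply (gen_image_inv _ _ _ _ (proj1 Hio)); auto.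
  - intros y Hy. destruct (gen_image_inv _ _ _ _ (proj1 Hio) y Hy) as [z [Hz <-]].
    rewrite Ephi by auto. apply gen_image; [apply Hpsi|]. apply gen_cons; auto.
  - eapply hom_on_mono; [|apply transport_hom; auto using gen_closed, hom_hom_on].
    intros y Hy. apply (gen_image_inv _ _ _ _ (proj1 Hpsi)); auto.
  - intros y Hy. destruct (gen_image_inv _ _ _ _ (proj1 Hio) y Hy) as [z [Hz <-]].
    rewrite Ephi, Eg by (auto; apply gen_cons; auto). symmetry; auto.
  - assert (Hpsi_in : forall z, gen A (x :: l) z -> gen U (map psi (x :: l)) (psi z)).
    { intros z Hz. apply gen_image; auto. apply Hpsi. }
    exists (fun z => k (psi z)). split; [split|].
    + simpl. eapply emb_on_comp; eauto.
    + simpl. intros z Hz. rewrite Hku by auto. apply Eg; auto.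
    + intros z Hz. rewrite <- Ephi by auto. apply Hkphi. apply gen_image; auto. apply Hio.
Qed.

Lemma u_lifting : exists io : A -> U, is_emb A U io /\ forall a, h a = u (io a).
Proof.
  destruct lifting_start as [io0 H0].
  assert (Hstep : forall n st, lifting_stage st -> exists st', lifting_stage st' /\
            extends A U st st' /\ True /\ forall x, cA x = n -> gen A (fst st') x).
  { intros n [l io] HI. destruct (classic (exists x, cA x = n)) as [[x Hx]|Hno].
    - destruct (lifting_step l x io HI) as [io' [HI' E']]. exists (x :: l, io').
      split; [exact HI'|split; [split|split; [exact I|]]]; simpl.
      + intros; apply gen_cons; auto.
      + exact E'.
      + intros y Hy. apply gen_in. left. apply HcA. congruence.
    - exists (l, io). split; [exact HI|split; [split; auto|split; [exact I|]]].
      intros y Hy; exfalso; eauto. }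
  destruct (build_chain A U cA lifting_stage (fun _ _ _ => True) _ H0 Hstep)
    as [sq [_ [Hch [Hcov Hsq]]]].
  assert (Hex : exhaustive A U sq) by (intro x; exists (S (cA x)); apply Hcov).
  destruct (chain_limit A U sq Hch Hex) as [io Hio].
  exists io. split; [apply (union_emb A U sq io Hch Hex Hio); intro n; apply Hsq|].
  intro x. destruct (Hex x) as [n Hn]. rewrite (Hio n x Hn). symmetry. apply (proj2 (proj1 (Hsq n))), Hn.
Qed.

End Universality.

End ExtensionProperty.

End Structures.

Theorem proposition4p7 (sg : signature) (C : structure sg -> Prop) (U : structure sg) :
  fraisse_class C -> fraisse_limit C U ->
  ((exists u : U -> U, univ_hom_endo U u) <-> (AEP C /\ HAP C)).
Proof.
  intros _ [Ucount [Uhom HCU]].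
  assert (EC : C = age_of U).
  { apply functional_extensionality. intro A. apply propositional_extensionality. apply HCU. }
  subst C. split.
  - intros [u Hu]. split; [exact (AEP_of_u _ U Ucount u Hu) | exact (HAP_of_u _ U Uhom Ucount u Hu)].
  - intros [HAEP HHAP]. destruct Ucount as [c Hc].
    destruct (endo_with_extension_property _ U Uhom HAEP HHAP c Hc) as [u [Huh Hext]].
    exists u. split; [exact Huh|split].
    + intros A h HA Hh.
      assert (Hage : forall l, age_of U (genSub A l)) by (intro l; apply cbar_sub, HA).
      destruct HA as [[cA HcA] _].
      exact (u_lifting _ U u Huh Hext A h Hh Hage cA HcA).
    + exact (u_homogeneity _ U u Huh Hext c Hc).
Qed.
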